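(* Let $G=H\rtimes\mathbb{Z}$ be a group with finite generating set $(X,\pi)$, where $H$ is the normal factor, and let $f\colon G\to\mathbb{Z}$ be the projection with kernel $H$. Let $\prec$ be a left-order on $G$ which is lexicographic led by $\mathbb{Z}$, i.e. whose positive cone is $f^{-1}(P_{\mathbb{Z}})\cup P_H$ for some positive cone $P_{\mathbb{Z}}$ of $\mathbb{Z}$ and some positive cone $P_H$ of $H$, and let $\mathcal{L}\subseteq X^*$ be a regular language with $\pi(\mathcal{L})$ equal to the positive cone of $\prec$. If $H$ is finitely generated, then $H$ is language-convex with respect to $\mathcal{L}$. In particular, the restriction of $\prec$ to $H$ is a regular left-order.
   Context: A finite generating set of $G$ is a finite set $X$ with a surjective monoid homomorphism $\pi\colon X^*\to G$; $\mathrm{dist}$ denotes the word metric on $G$ with respect to $X$. A positive cone of a group $K$ is a subsemigroup $P$ with $K=P\sqcup P^{-1}\sqcup\{1\}$. A subset $H\subseteq G$ is language-convex with respect to a language $\mathcal{L}\subseteq X^*$ if there is $R\ge0$ such that for every $w=x_1\cdots x_n\in\mathcal{L}$ with $\pi(w)\in H$, every prefix $w_i=x_1\cdots x_i$ satisfies $\mathrm{dist}(\pi(w_i),H)\le R$. A left-order on a finitely generated group $K$ is regular if there is a finite generating set $(Y,\pi_K)$ of $K$ and a regular language $\mathcal{M}\subseteq Y^*$ with $\pi_K(\mathcal{M})$ equal to its positive cone. *)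

From mathcomp Require Import all_boot all_algebra.
Set Implicit Arguments. Unset Strict Implicit. Unset Printing Implicit Defensive.
Import GRing.Theory.
Local Open Scope ring_scope.

Record group := Group {
  gcarrier :> Type;
  gmul : gcarrier -> gcarrier -> gcarrier;
  gone : gcarrier;
  ginv : gcarrier -> gcarrier;
  gmulA : forall a b c, gmul a (gmul b c) = gmul (gmul a b) c;
  gmul1g : forall a, gmul gone a = a;
  gmulg1 : forall a, gmul a gone = a;
  gmulVg : forall a, gmul (ginv a) a = gone;
  gmulgV : forall a, gmul a (ginv a) = gone }.

Section Defs.
Variable G : group.

Definition weval (X : Type) (pi : X -> G) (w : seq X) : G :=
  foldr (fun x g => gmul (pi x) g) (gone G) w.

Definition gen_set_of (K : G -> Prop) (X : finType) (pi : X -> G) : Prop :=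
  (forall x, K (pi x)) /\ (forall k, K k -> exists w : seq X, weval pi w = k).

Definition gen_set (X : finType) (pi : X -> G) : Prop := gen_set_of (fun _ => True) pi.

Definition fin_generated (K : G -> Prop) : Prop :=
  exists (X : finType) (pi : X -> G), gen_set_of K pi.

Definition dist_le (X : finType) (pi : X -> G) (g : G) (K : G -> Prop) (R : nat) : Prop :=
  exists h, K h /\ exists w : seq X, (size w <= R)%N /\ weval pi w = gmul (ginv g) h.

Definition pos_cone_in (K : G -> Prop) (P : G -> Prop) : Prop :=
  (forall g, P g -> K g) /\
  (forall a b, P a -> P b -> P (gmul a b)) /\
  (forall g, K g ->
     (P g \/ P (ginv g) \/ g = gone G) /\
     ~ (P g /\ P (ginv g)) /\ ~ (P g /\ g = gone G) /\ ~ (P (ginv g) /\ g = gone G)).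

Definition left_order (lt : G -> G -> Prop) : Prop :=
  (forall a, ~ lt a a) /\
  (forall a b c, lt a b -> lt b c -> lt a c) /\
  (forall a b, a <> b -> lt a b \/ lt b a) /\
  (forall a b c, lt a b -> lt (gmul c a) (gmul c b)).

Definition group_hom_to_int (f : G -> int) : Prop :=
  forall a b, f (gmul a b) = f a + f b.

Definition language_convex (X : finType) (pi : X -> G) (K : G -> Prop)
    (L : seq X -> Prop) : Prop :=
  exists R : nat, forall w, L w -> K (weval pi w) ->
    forall i, (i <= size w)%N -> dist_le pi (weval pi (take i w)) K R.
End Defs.

Definition pos_cone_int (P : int -> Prop) : Prop :=
  (forall a b, P a -> P b -> P (a + b)) /\
  (forall n, (P n \/ P (- n) \/ n = 0) /\
     ~ (P n /\ P (- n)) /\ ~ (P n /\ n = 0) /\ ~ (P (- n) /\ n = 0)).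

Record dfa (X : finType) := DFA {
  dstate : finType;
  dstart : dstate;
  dtrans : dstate -> X -> dstate;
  dfinal : pred dstate }.

Definition dfa_accepts (X : finType) (A : dfa X) (w : seq X) : bool :=
  @dfinal X A (foldl (@dtrans X A) (@dstart X A) w).

Definition regular (X : finType) (L : seq X -> Prop) : Prop :=
  exists A : dfa X, forall w, L w <-> dfa_accepts A w.

Definition regular_restricted_order (G : group) (K : G -> Prop) (lt : G -> G -> Prop) : Prop :=
  exists (Y : finType) (piK : Y -> G), gen_set_of K piK /\
    exists M : seq Y -> Prop, regular M /\
      forall h, (K h /\ lt (gone G) h) <-> exists w, M w /\ weval piK w = h.

(* Words of the regular language L of positive elements have degree f in P_Z or 0.  If an
   accepted word of degree 0 reads a loop b of the automaton, deleting or doubling b yields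
   accepted words of degrees -f(b) and f(b), so f(b) = 0.  Pumping out such loops, every prefix
   of the word has the degree of a word shorter than the number of states, so a word of bounded
   length brings it back into H = ker f: this is language-convexity.
   The bounded correction words t give finitely many elements t1^-1 x t2 of H which, together
   with generators of H, generate H; an automaton simulating the one for L while remembering the
   current correction accepts exactly the words in these letters spelling positive elements of H. *)

From mathcomp Require Import all_boot all_algebra.
From mathcomp Require Import zify.
Set Implicit Arguments. Unset Strict Implicit. Unset Printing Implicit Defensive.
Import GRing.Theory.
Local Open Scope ring_scope.

Section GroupWords.
Variable G : group.

Lemma ginv1 : ginv (gone G) = gone G.
Proof. by rewrite -[LHS]gmulg1 gmulVg. Qed.

Lemma gmul_cancel_mid (a x b y : G) :
  gmul (gmul (ginv a) (gmul x b)) (gmul (ginv b) y) = gmul (ginv a) (gmul x y).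
Proof. by rewrite -!gmulA (gmulA b) gmulgV gmul1g. Qed.

Variables (X : Type) (pi : X -> G).

Lemma weval_cat a b : weval pi (a ++ b) = gmul (weval pi a) (weval pi b).
Proof.
elim: a => [|x a IHa]; first by rewrite gmul1g.
by rewrite cat_cons /= -gmulA -IHa.
Qed.

End GroupWords.

Lemma dist_le_of_word (G : group) (X : finType) (pi : X -> G) (K : G -> Prop) g v R :
  (size v <= R)%N -> K (gmul g (weval pi v)) -> dist_le pi g K R.
Proof.
move=> size_v Kgv; exists (gmul g (weval pi v)); split => //.
by exists v; rewrite gmulA gmulVg gmul1g.
Qed.

Section WordDegree.
Variables (G : group) (f : G -> int) (X : finType) (pi : X -> G).
Hypothesis f_hom : group_hom_to_int f.

Lemma ghom1 : f (gone G) = 0.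
Proof. by have := f_hom (gone G) (gone G); rewrite gmul1g; lia. Qed.

Lemma ghomV a : f (ginv a) = - f a.
Proof. by have := f_hom (ginv a) a; rewrite gmulVg ghom1; lia. Qed.

Definition wdeg (w : seq X) : int := f (weval pi w).

Lemma wdeg_nil : wdeg [::] = 0.
Proof. exact: ghom1. Qed.

Lemma wdeg_cons x w : wdeg (x :: w) = f (pi x) + wdeg w.
Proof. exact: f_hom. Qed.

Lemma wdeg_cat a b : wdeg (a ++ b) = wdeg a + wdeg b.
Proof. by rewrite /wdeg weval_cat f_hom. Qed.

Lemma wdeg_ker_gens : (forall x, f (pi x) = 0) -> forall w, wdeg w = 0.
Proof.
by move=> gens_ker; elim=> [|x w IHw]; rewrite ?wdeg_nil // wdeg_cons gens_ker IHw addr0.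
Qed.

Lemma wdeg_flatten_nseq k w : wdeg (flatten (nseq k w)) = k%:Z * wdeg w.
Proof.
elim: k => [|k IHk]; first by rewrite wdeg_nil mul0r.
by rewrite /= wdeg_cat IHk intS mulrDl mul1r.
Qed.

Lemma abs_wdeg_le u : (absz (wdeg u) <= size u * \max_(x : X) absz (f (pi x)))%N.
Proof.
elim: u => [|x u IHu]; first by rewrite wdeg_nil.
have := @leq_bigmax _ (fun x => absz (f (pi x))) x.
by rewrite wdeg_cons [size _]/= mulSn; lia.
Qed.

Lemma wdeg_surj : gen_set pi -> (forall n, exists g, f g = n) ->
  forall n, exists w, wdeg w = n.
Proof.
move=> [_ gen] f_surj n; have [g <-] := f_surj n.
by have [w <-] := gen g I; exists w.
Qed.

Lemma short_word_of_wdeg : (forall n, exists w, wdeg w = n) ->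
  exists B, forall n, exists w, wdeg w = n /\ (size w <= absz n * B)%N.
Proof.
move=> wdeg_surj; have [[e1 deg_e1] [e2 deg_e2]] := (wdeg_surj 1, wdeg_surj (-1)).
have size_pow k (e : seq X) : size (flatten (nseq k e)) = (size e * k)%N.
  by rewrite size_flatten /shape map_nseq sumn_nseq.
exists (size e1 + size e2)%N; case=> [k|k].
  exists (flatten (nseq k e1)); rewrite wdeg_flatten_nseq deg_e1 size_pow.
  by split; [rewrite mulr1 | rewrite mulnC leq_mul2l leq_addr orbT].
exists (flatten (nseq k.+1 e2)); rewrite wdeg_flatten_nseq deg_e2 size_pow.
by split; [rewrite NegzE mulrN1 | rewrite NegzE abszN mulnC leq_mul2l leq_addl orbT].
Qed.

End WordDegree.

Section DfaLoops.
Variables (X : finType) (A : dfa X).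

Definition dfa_run : dstate A -> seq X -> dstate A := foldl (@dtrans X A).

Lemma dfa_acceptsE w : dfa_accepts A w = dfinal (dfa_run (dstart A) w).
Proof. by []. Qed.

Lemma dfa_run_loop q p : (#|dstate A| <= size p)%N ->
  exists a b c, [/\ p = a ++ b ++ c, (0 < size b)%N & dfa_run q (a ++ b) = dfa_run q a].
Proof.
move=> long_p; pose runs := [seq dfa_run q (take i p) | i <- iota 0 (size p).+1].
have /(uniqPn q) [i [j [lt_ij lt_j eq_ij]]] : ~~ uniq runs.
  apply/negP => /card_uniqP card_runs.
  by move: (max_card (mem runs)); rewrite card_runs size_map size_iota; lia.
rewrite size_map size_iota in lt_j; have lt_i := ltn_trans lt_ij lt_j.
rewrite !(nth_map 0%N) ?size_iota // !nth_iota // !add0n in eq_ij.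
exists (take i p), (drop i (take j p)), (drop j p); split.
- by rewrite catA -{1}(take_takel p (ltnW lt_ij)) !cat_take_drop.
- by rewrite size_drop size_takel; lia.
- by rewrite -{1}(take_takel p (ltnW lt_ij)) cat_take_drop.
Qed.

Lemma dfa_run_pump q a b s : dfa_run q (a ++ b) = dfa_run q a ->
  dfa_run q (a ++ b ++ s) = dfa_run q (a ++ s).
Proof.
by rewrite /dfa_run catA !(foldl_cat _ _ (_ ++ _)) foldl_cat => ->; rewrite -foldl_cat.
Qed.

End DfaLoops.

Lemma pos_cone_int_eq0 (PZ : int -> Prop) d : pos_cone_int PZ ->
  PZ d \/ d = 0 -> PZ (- d) \/ - d = 0 -> d = 0.
Proof.
move=> [_ /(_ d) [_ [not_both _]]] [Pd|//] [PNd|]; last by lia.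
by case: not_both.
Qed.

Section BoundedPrefixDegree.
Variables (G : group) (f : G -> int) (X : finType) (pi : X -> G) (A : dfa X)
  (PZ : int -> Prop).
Hypotheses (f_hom : group_hom_to_int f) (PZ_cone : pos_cone_int PZ).
Hypothesis accepted_wdeg_nonneg :
  forall w, dfa_accepts A w -> PZ (wdeg f pi w) \/ wdeg f pi w = 0.

Local Notation wdeg := (wdeg f pi).

Lemma wdeg_loop_eq0 a b c : dfa_accepts A (a ++ b ++ c) -> wdeg (a ++ b ++ c) = 0 ->
  dfa_run (dstart A) (a ++ b) = dfa_run (dstart A) a -> wdeg b = 0.
Proof.
move=> acc deg0 loop_b.
have acc_del : dfa_accepts A (a ++ c) by rewrite dfa_acceptsE -(dfa_run_pump c loop_b).
have acc_dup : dfa_accepts A (a ++ b ++ b ++ c) by rewrite dfa_acceptsE dfa_run_pump.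
move: deg0 (accepted_wdeg_nonneg acc_dup) (accepted_wdeg_nonneg acc_del).
rewrite !wdeg_cat // => deg0; have -> : wdeg a + wdeg c = - wdeg b by lia.
have -> : wdeg a + (wdeg b + (wdeg b + wdeg c)) = wdeg b by lia.
exact: pos_cone_int_eq0.
Qed.

Lemma prefix_wdeg_short p c : dfa_accepts A (p ++ c) -> wdeg (p ++ c) = 0 ->
  exists2 u, (size u < #|dstate A|)%N & wdeg u = wdeg p.
Proof.
have [n] := ubnP (size p); elim: n p => // n IHn p /ltnSE size_p acc deg0.
have [short_p|long_p] := ltnP (size p) #|dstate A|; first by exists p.
have [a [b [c' [def_p nonempty_b loop_b]]]] := dfa_run_loop (dstart A) long_p.
rewrite def_p -!catA in acc deg0.
have deg_b := wdeg_loop_eq0 acc deg0 loop_b.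
have -> : wdeg p = wdeg (a ++ c') by rewrite def_p !wdeg_cat // deg_b add0r.
apply: IHn.
- by move: size_p; rewrite def_p !size_cat; lia.
- by move: acc; rewrite -catA !dfa_acceptsE dfa_run_pump.
- by move: deg0; rewrite !wdeg_cat // => ?; lia.
Qed.

Lemma prefix_wdeg_correction : (forall n, exists w, wdeg w = n) ->
  exists R, forall w, dfa_accepts A w -> wdeg w = 0 ->
    forall i, exists v, (size v <= R)%N /\ wdeg (take i w) + wdeg v = 0.
Proof.
move=> /(short_word_of_wdeg f_hom) [B short_word].
exists (#|dstate A| * (\max_(x : X) absz (f (pi x))) * B)%N => w acc deg0 i.
rewrite -(cat_take_drop i w) in acc deg0.
have [u short_u deg_u] := prefix_wdeg_short acc deg0.
have [v [deg_v size_v]] := short_word (- wdeg (take i w)).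
exists v; split; last by rewrite deg_v addrN.
apply: leq_trans size_v _; rewrite abszN -deg_u leq_mul //.
apply: leq_trans (abs_wdeg_le pi f_hom u) _.
by rewrite leq_mul2r (ltnW short_u) orbT.
Qed.

End BoundedPrefixDegree.

Section KernelAutomaton.
Variables (G : group) (f : G -> int) (H : G -> Prop) (X : finType) (pi : X -> G)
  (A : dfa X) (R : nat) (Z : finType) (piZ : Z -> G).
Hypotheses (f_hom : group_hom_to_int f) (kerH : forall g, H g <-> f g = 0)
  (piZ_gen : gen_set_of H piZ).

Local Notation wdeg := (wdeg f pi).

Definition bridge (t1 : seq X) (x : X) (t2 : seq X) : G :=
  gmul (ginv (weval pi t1)) (gmul (pi x) (weval pi t2)).

Lemma wdeg_bridge t1 x t2 : f (bridge t1 x t2) = - wdeg t1 + f (pi x) + wdeg t2.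
Proof. by rewrite /bridge !f_hom ghomV // addrA. Qed.

Definition ker_letter : finType := (Z + (R.-bseq X * X * R.-bseq X))%type.

Definition ker_gen (y : ker_letter) : G :=
  match y with
  | inl z => piZ z
  | inr (t1, x, t2) => if f (bridge t1 x t2) == 0 then bridge t1 x t2 else gone G
  end.

Definition ker_state : finType := option (dstate A * R.-bseq X).

(* The letter [inr (t1, x, t2)] stands for [t1^-1 x t2] and is read only from a state whose
   correction is [t1], so that consecutive corrections cancel; the letters [inl z] are never
   read, they only make [ker_gen] generate [H]. *)
Definition ker_trans (s : ker_state) (y : ker_letter) : ker_state :=
  match s, y with
  | Some (q, t), inr (t1, x, t2) =>
      if (t1 == t) && (f (bridge t1 x t2) == 0) then Some (dtrans q x, t2) else None
  | _, _ => None
  end.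

Definition ker_dfa : dfa ker_letter :=
  DFA (Some (dstart A, [bseq])) ker_trans
      (fun s => if s is Some (q, t) then dfinal q && (t == [bseq]) else false).

Lemma ker_run_None ys : dfa_run (None : dstate ker_dfa) ys = None.
Proof. by elim: ys. Qed.

Lemma ker_dfa_sound ys q t q' t' :
  dfa_run (Some (q, t) : dstate ker_dfa) ys = Some (q', t') ->
  exists2 xs, q' = dfa_run q xs &
    weval ker_gen ys = gmul (ginv (weval pi t)) (gmul (weval pi xs) (weval pi t')).
Proof.
elim: ys q t => [|[z|[[t1 x] t2]] ys IHys] q t /=.
- by case=> <- <-; exists [::]; rewrite //= gmul1g gmulVg.
- by rewrite ker_run_None.
case: ifP => [/andP[/eqP-> /eqP bridge_ker]|_]; last by rewrite ker_run_None.
move=> /IHys[xs -> ->]; exists (x :: xs) => //=.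
by rewrite bridge_ker eqxx /bridge gmul_cancel_mid -gmulA.
Qed.

Lemma ker_dfa_complete s q (c : nat -> R.-bseq X) :
  (forall i, (i <= size s)%N -> wdeg (take i s) + wdeg (c i) = wdeg (c 0%N)) ->
  exists ys,
    dfa_run (Some (q, c 0%N) : dstate ker_dfa) ys = Some (dfa_run q s, c (size s)) /\
    weval ker_gen ys =
      gmul (ginv (weval pi (c 0%N))) (gmul (weval pi s) (weval pi (c (size s)))).
Proof.
elim: s q c => [|x s IHs] q c c_ok.
  by exists [::]; rewrite /= gmul1g gmulVg.
have deg_c1 := c_ok 1%N isT; rewrite /= take0 wdeg_cons // wdeg_nil // in deg_c1.
have bridge_ker : f (bridge (c 0%N) x (c 1%N)) = 0 by rewrite wdeg_bridge; lia.
have [|ys [run_ys weval_ys]] := IHs (dtrans q x) (c \o succn).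
  move=> i le_i; have := c_ok i.+1 le_i; rewrite /= wdeg_cons //; lia.
exists (inr (c 0%N, x, c 1%N) :: ys); split; first by rewrite /= eqxx bridge_ker.
by rewrite /= bridge_ker eqxx weval_ys /bridge gmul_cancel_mid -gmulA.
Qed.

Lemma ker_gen_ker y : f (ker_gen y) = 0.
Proof.
case: y => [z|[[t1 x] t2]] /=; first exact/kerH/piZ_gen.1.
by case: ifP => [/eqP|_] //; apply: ghom1.
Qed.

Lemma ker_gen_gen_set : gen_set_of H ker_gen.
Proof.
split=> [y|k /piZ_gen.2 [ws <-]]; first exact/kerH/ker_gen_ker.
by exists (map inl ws); elim: ws => //= z ws ->.
Qed.

Lemma correction_fun w :
  (forall i, exists v, (size v <= R)%N /\ wdeg (take i w) + wdeg v = 0) -> wdeg w = 0 ->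
  exists c : nat -> R.-bseq X,
    [/\ c 0%N = [bseq], c (size w) = [bseq] & forall i, wdeg (take i w) + wdeg (c i) = 0].
Proof.
move=> corr deg0; exists (fun i => if wdeg (take i w) == 0 then [bseq]
  else odflt [bseq] [pick t : R.-bseq X | wdeg (take i w) + wdeg t == 0]).
rewrite take0 wdeg_nil // take_size deg0 eqxx; split => // i.
case: eqP => [->|_]; first by rewrite add0r wdeg_nil.
case: pickP => [t /eqP //|no_t].
have [v [size_v deg_v]] := corr i.
by have := no_t (Bseq size_v); rewrite /= deg_v eqxx.
Qed.

Hypothesis corrections : forall w, dfa_accepts A w -> wdeg w = 0 ->
  forall i, exists v, (size v <= R)%N /\ wdeg (take i w) + wdeg v = 0.

Lemma ker_dfa_accepts h :
  (f h = 0 /\ exists w, dfa_accepts A w /\ weval pi w = h) <->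
  exists ys, dfa_accepts ker_dfa ys /\ weval ker_gen ys = h.
Proof.
split=> [[deg0 [w [acc def_h]]]|[ys []]].
  rewrite -def_h in deg0 *.
  have [c [c0 c_end c_ok]] := correction_fun (corrections acc deg0) deg0.
  have [|ys [run_ys weval_ys]] := ker_dfa_complete (s := w) (dstart A) (c := c).
    by move=> i _; rewrite c_ok c0 wdeg_nil.
  rewrite c0 c_end in run_ys weval_ys; exists ys; split.
    by rewrite dfa_acceptsE /= run_ys /= eqxx andbT.
  by rewrite weval_ys /= ginv1 gmul1g gmulg1.
rewrite dfa_acceptsE /=.
case run_ys: (dfa_run _ ys) => [[q t]|] // /andP[final_q /eqP t0] <-.
split; first exact: (wdeg_ker_gens f_hom ker_gen_ker).
have [xs def_q ->] := ker_dfa_sound run_ys.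
by exists xs; rewrite dfa_acceptsE -def_q t0 /= ginv1 gmul1g gmulg1.
Qed.

End KernelAutomaton.

Lemma lex_pos_f_nonneg (G : group) (f : G -> int) (H : G -> Prop) (lt : G -> G -> Prop)
    (PZ : int -> Prop) (PH : G -> Prop) :
  (forall g, H g <-> f g = 0) -> pos_cone_in H PH ->
  (forall g, lt (gone G) g <-> (PZ (f g) \/ PH g)) ->
  forall g, lt (gone G) g -> PZ (f g) \/ f g = 0.
Proof.
by move=> kerH [PH_H _] lex g /lex [PZg|/PH_H/kerH]; [left | right].
Qed.

Theorem proposition4p3
  (G : group) (X : finType) (pi : X -> G) (f : G -> int) (H : G -> Prop)
  (lt : G -> G -> Prop) (L : seq X -> Prop) :
  gen_set pi ->
  group_hom_to_int f ->
  (forall n : int, exists g, f g = n) ->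
  (forall g, H g <-> f g = 0) ->
  left_order lt ->
  (exists (PZ : int -> Prop) (PH : G -> Prop),
     pos_cone_int PZ /\ pos_cone_in H PH /\
     (forall g, lt (gone G) g <-> (PZ (f g) \/ PH g))) ->
  regular L ->
  (forall g, lt (gone G) g <-> exists w, L w /\ weval pi w = g) ->
  fin_generated H ->
  language_convex pi H L /\ regular_restricted_order H lt.
Proof.
(* The left-order axioms are not needed: the description of the positive cone suffices. *)
move=> gen f_hom f_surj kerH _ [PZ [PH [PZ_cone [PH_cone lex]]]] [A L_A] cone.
move=> [Z [piZ piZ_gen]].
have acc_nonneg w : dfa_accepts A w -> PZ (wdeg f pi w) \/ wdeg f pi w = 0.
  by move=> /L_A Lw; apply: (lex_pos_f_nonneg kerH PH_cone lex); apply/cone; exists w.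
have [R corrections] :=
  prefix_wdeg_correction f_hom PZ_cone acc_nonneg (wdeg_surj gen f_surj).
split.
  exists R => w /L_A acc /kerH deg0 i _.
  have [v [size_v deg_v]] := corrections w acc deg0 i.
  by apply: (dist_le_of_word size_v); apply/kerH; rewrite f_hom.
exists (ker_letter X R Z), (ker_gen f pi (R := R) piZ).
split; first exact: ker_gen_gen_set.
exists (dfa_accepts (ker_dfa f pi A R Z)); split; first by exists (ker_dfa f pi A R Z).
move=> h; rewrite -(ker_dfa_accepts f_hom kerH piZ_gen corrections) kerH cone.
by split=> -[deg0 [w [Lw def_h]]]; split=> //; exists w; split=> //; apply/L_A.
Qed.
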